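(* Let $s\in\mathbb{R}$ and let $f:\mathbb{R}^n\to\overline{\mathbb{R}}$ be variationally $s$-convex at $\bar x\in\operatorname{dom}f$ for $\bar v\in\partial f(\bar x)$. Then there exist $\varepsilon>0$ and the $f$-attentive $\varepsilon$-localization $T_\varepsilon$ of $\partial f$ around $(\bar x,\bar v)$ such that $d^2f(x|v)(w)\ge s\|w\|^2$ for all $(x,v)\in\operatorname{gph}T_\varepsilon$ and all $w\in\mathbb{R}^n$.
   Context: $f$ is proper l.s.c.; $\partial f$ is the limiting subdifferential. Variational $s$-convexity at $\bar x$ for $\bar v$: $f(\bar x)$ finite and there exist a function $\hat f$ with $\hat f-\frac s2\|\cdot\|^2$ convex, convex neighborhoods $U\ni\bar x$, $V\ni\bar v$ and $\varepsilon>0$ with $\hat f\le f$ on $U$, $(U\times V)\cap\operatorname{gph}\partial\hat f=(U_\varepsilon\times V)\cap\operatorname{gph}\partial f$ ($U_\varepsilon=\{x\in U:f(x)<f(\bar x)+\varepsilon\}$), and $\hat f=f$ at common elements. $\operatorname{gph}T_\varepsilon=\{(x,v)\in\operatorname{gph}\partial f:\|x-\bar x\|<\varepsilon,\|v-\bar v\|<\varepsilon,f(x)<f(\bar x)+\varepsilon\}$. $d^2f(x|v)(w)=\liminf_{t\downarrow0,w'\to w}\frac{f(x+tw')-f(x)-t\langle v,w'\rangle}{\frac12t^2}$. *)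

From HB Require Import structures.
From mathcomp Require Import all_boot all_order all_algebra.
From mathcomp Require Import all_classical all_reals.
From mathcomp Require Import ereal.
Set Implicit Arguments. Unset Strict Implicit. Unset Printing Implicit Defensive.
Import Order.TTheory GRing.Theory Num.Theory.
Local Open Scope classical_set_scope.
Local Open Scope ring_scope.

Section Defs.
Variables (R : realType) (n : nat).
Local Notation vec := 'rV[R]_n.

Definition dotv (u v : vec) : R := \sum_(i < n) u ord0 i * v ord0 i.
Definition sqn (u : vec) : R := dotv u u.
Definition enorm (u : vec) : R := Num.sqrt (sqn u).

Definition vcvg (u : nat -> vec) (x : vec) : Prop :=
  forall e : R, 0 < e -> exists N : nat, forall k, (N <= k)%N -> enorm (u k - x) < e.

Definition proper_fun (f : vec -> \bar R) : Prop :=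
  (forall x, f x != -oo%E) /\ exists x, f x \is a fin_num.

Definition lsc_fun (f : vec -> \bar R) : Prop :=
  forall x (a : R), (a%:E < f x)%E ->
    exists d : R, 0 < d /\ forall y, enorm (y - x) < d -> (a%:E < f y)%E.

(* regular (Frechet) subgradient: liminf_{y->x} (f y - f x - <v,y-x>)/|y-x| >= 0 *)
Definition regular_subdiff (f : vec -> \bar R) (x v : vec) : Prop :=
  f x \is a fin_num /\
  forall e : R, 0 < e -> exists d : R, 0 < d /\
    forall y, enorm (y - x) < d ->
      ((fine (f x) + dotv v (y - x) - e * enorm (y - x))%:E <= f y)%E.

Definition limiting_subdiff (f : vec -> \bar R) (x v : vec) : Prop :=
  f x \is a fin_num /\
  exists (xs vs : nat -> vec),
    (forall k, regular_subdiff f (xs k) (vs k)) /\ vcvg xs x /\ vcvg vs v /\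
    (forall e : R, 0 < e -> exists N : nat, forall k, (N <= k)%N ->
        f (xs k) \is a fin_num /\ `|fine (f (xs k)) - fine (f x)| < e).

(* convexity of an extended-real-valued function (convex epigraph) *)
Definition econvex (g : vec -> \bar R) : Prop :=
  forall (x y : vec) (a b t : R), 0 <= t -> t <= 1 ->
    (g x <= a%:E)%E -> (g y <= b%:E)%E ->
    (g (t *: x + (1 - t) *: y)%R <= (t * a + (1 - t) * b)%:E)%E.

Definition convset (U : set vec) : Prop :=
  forall x y (t : R), 0 <= t -> t <= 1 -> U x -> U y -> U (t *: x + (1 - t) *: y).

Definition is_nbhd (U : set vec) (x : vec) : Prop :=
  exists d : R, 0 < d /\ forall y, enorm (y - x) < d -> U y.

Definition var_s_convex (s : R) (f : vec -> \bar R) (xb vb : vec) : Prop :=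
  f xb \is a fin_num /\
  exists (fh : vec -> \bar R) (U V : set vec) (eps : R),
    econvex (fun x => (fh x - (s / 2 * sqn x)%R%:E)%E) /\
    convset U /\ convset V /\ is_nbhd U xb /\ is_nbhd V vb /\ 0 < eps /\
    (forall x, U x -> (fh x <= f x)%E) /\
    (forall x v, (U x /\ V v /\ limiting_subdiff fh x v) <->
                 ((U x /\ (f x < (fine (f xb) + eps)%:E)%E) /\ V v /\
                  limiting_subdiff f x v)) /\
    (forall x v, U x -> V v -> limiting_subdiff fh x v -> fh x = f x).

Definition gph_T (f : vec -> \bar R) (xb vb : vec) (eps : R) (x v : vec) : Prop :=
  limiting_subdiff f x v /\ enorm (x - xb) < eps /\ enorm (v - vb) < eps /\
  (f x < (fine (f xb) + eps)%:E)%E.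

(* second subderivative d^2 f(x|v)(w) =
   liminf_{t \downarrow 0, w' -> w} (f(x+tw') - f x - t<v,w'>) / (t^2/2) *)
Definition d2 (f : vec -> \bar R) (x v w : vec) : \bar R :=
  ereal_sup [set ereal_inf [set q | exists (t : R) (w' : vec),
                  [/\ 0 < t, t < d, enorm (w' - w) < d &
                   q = ((2 / t ^+ 2)%:E *
                        (f (x + t *: w')%R - f x - (t * dotv v w')%:E))%E]]
            | d in [set d : R | 0 < d]].

End Defs.

From HB Require Import structures.
From mathcomp Require Import all_boot all_order all_algebra.
From mathcomp Require Import all_classical all_reals.
From mathcomp Require Import ereal.
From mathcomp Require Import ring lra.
Import Order.TTheory GRing.Theory Num.Theory.
Local Open Scope classical_set_scope.
Local Open Scope ring_scope.

(* Since fh - (s/2)|.|^2 is convex, a regular subgradient v of fh at x yields the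
   global quadratic minorant fh y >= fh x + <v, y - x> + (s/2)|y - x|^2, and this
   minorant survives the limit defining limiting subgradients.  Variational
   s-convexity identifies the f-attentive localization of gph ∂f with a piece of
   gph ∂fh on which fh = f, while fh <= f near xb; so f inherits the minorant near
   every x of the localization.  Inserted into the second-order difference
   quotients of f, the minorant gives d^2 f(x|v)(w) >= s|w|^2. *)

Section SmallReals.
Context {R : realFieldType}.
Implicit Types a K eta : R.

Lemma exists_small_factor K eta : 0 <= K -> 0 < eta ->
  exists2 d : R, 0 < d & d <= 1 /\ d * K < eta.
Proof.
move=> K_ge0 eta_gt0; have K1_gt0 : 0 < K + 1 by lra.
have d_gt0 : 0 < Order.min 1 (eta / (K + 1)) by rewrite lt_min ltr01 divr_gt0.
exists (Order.min 1 (eta / (K + 1))) => //; split; first by rewrite ge_min lexx.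
have : Order.min 1 (eta / (K + 1)) * (K + 1) <= eta.
  by rewrite -ler_pdivlMr // ge_min lexx orbT.
nra.
Qed.

Lemma le0_of_le_linear a K (t0 : R) : 0 < t0 ->
  (forall t, 0 < t -> t < t0 -> a <= K * t) -> a <= 0.
Proof.
move=> t0_gt0 le_aKt; apply/ler_addgt0Pr => e e_gt0; rewrite add0r.
have [d d_gt0 [_ dK]] := exists_small_factor _ _ (normr_ge0 K) e_gt0.
pose t := Order.min d (t0 / 2).
have t_gt0 : 0 < t by rewrite lt_min d_gt0 divr_gt0.
have t_lt : t < t0 by rewrite gt_min; apply/orP; right; lra.
have t_le : t <= d by rewrite ge_min lexx.
have := le_aKt t t_gt0 t_lt; have := ler_norm K; have := normr_ge0 K; nra.
Qed.

End SmallReals.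

Section Euclidean.
Context {R : realType} {n : nat}.
Local Notation vec := 'rV[R]_n.
Implicit Types (a t : R) (u v w x y : vec).

Lemma dotvC u v : dotv u v = dotv v u.
Proof. by apply: eq_bigr => i _; rewrite mulrC. Qed.

Lemma dotvDl u v w : dotv (u + v) w = dotv u w + dotv v w.
Proof. by rewrite /dotv -big_split; apply: eq_bigr => i _; rewrite !mxE mulrDl. Qed.

Lemma dotvDr u v w : dotv u (v + w) = dotv u v + dotv u w.
Proof. by rewrite dotvC dotvDl !(dotvC u). Qed.

Lemma dotvZl a u v : dotv (a *: u) v = a * dotv u v.
Proof. by rewrite /dotv mulr_sumr; apply: eq_bigr => i _; rewrite !mxE mulrA. Qed.

Lemma dotvZr a u v : dotv u (a *: v) = a * dotv u v.
Proof. by rewrite dotvC dotvZl dotvC. Qed.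

Lemma dotvNl u v : dotv (- u) v = - dotv u v.
Proof. by rewrite -scaleN1r dotvZl mulN1r. Qed.

Lemma dotvNr u v : dotv u (- v) = - dotv u v.
Proof. by rewrite dotvC dotvNl dotvC. Qed.

Lemma dotv0l v : dotv 0 v = 0.
Proof. by rewrite -(scale0r 0) dotvZl mul0r. Qed.

Lemma sqn_ge0 u : 0 <= sqn u.
Proof. by apply: sumr_ge0 => i _; rewrite -expr2 sqr_ge0. Qed.

Lemma sqnD u v : sqn (u + v) = sqn u + 2 * dotv u v + sqn v.
Proof. rewrite /sqn !dotvDl !dotvDr (dotvC v u); ring. Qed.

Lemma sqnN u : sqn (- u) = sqn u.
Proof. by rewrite /sqn dotvNl dotvNr opprK. Qed.

Lemma sqnZ a u : sqn (a *: u) = a ^+ 2 * sqn u.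
Proof. by rewrite /sqn dotvZl dotvZr mulrA expr2. Qed.

Lemma dotv_le_sqn u v : 2 * dotv u v <= sqn u + sqn v.
Proof. by have := sqn_ge0 (u - v); rewrite sqnD sqnN dotvNr; lra. Qed.

Lemma enorm_ge0 u : 0 <= enorm u.
Proof. exact: sqrtr_ge0. Qed.

Lemma sqn_enorm u : sqn u = enorm u ^+ 2.
Proof. by rewrite sqr_sqrtr ?sqn_ge0. Qed.

Lemma enormN u : enorm (- u) = enorm u.
Proof. by rewrite /enorm sqnN. Qed.

Lemma enormZ a u : enorm (a *: u) = `|a| * enorm u.
Proof. by rewrite /enorm sqnZ sqrtrM ?sqrtr_sqr ?sqr_ge0. Qed.

Lemma enorm_coord u i : `|u ord0 i| <= enorm u.
Proof.
rewrite /enorm -sqrtr_sqr ler_sqrt ?sqn_ge0 // /sqn /dotv (bigD1 i) //= expr2 lerDl.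
by apply: sumr_ge0 => j _; rewrite -expr2 sqr_ge0.
Qed.

Lemma enorm0_eq0 u : enorm u = 0 -> u = 0.
Proof.
move=> u0; apply/matrixP => i j; rewrite [i]ord1 mxE.
by apply/normr0_eq0/eqP; rewrite eq_le normr_ge0 -u0 enorm_coord.
Qed.

Lemma dotv_le_enorm u v : dotv u v <= enorm u * enorm v.
Proof.
have [/enorm0_eq0->|] := eqVneq (enorm u) 0; first by rewrite dotv0l mulr_ge0 ?enorm_ge0.
have [/enorm0_eq0->|] := eqVneq (enorm v) 0.
  by rewrite dotvC dotv0l mulr_ge0 ?enorm_ge0.
move=> nu nv; have uv_gt0 : 0 < enorm u * enorm v.
  by rewrite mulr_gt0 // lt0r ?nu ?nv enorm_ge0.
have := dotv_le_sqn (enorm v *: u) (enorm u *: v).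
rewrite dotvZl dotvZr !sqnZ !sqn_enorm; nra.
Qed.

Lemma normr_dotv_le_enorm u v : `|dotv u v| <= enorm u * enorm v.
Proof.
by rewrite ler_norml dotv_le_enorm andbT lerNl -dotvNl -(enormN u) dotv_le_enorm.
Qed.

Lemma enormD_le u v : enorm (u + v) <= enorm u + enorm v.
Proof.
rewrite /enorm -[X in _ <= X]ger0_norm ?addr_ge0 ?sqrtr_ge0 //.
rewrite -sqrtr_sqr ler_sqrt ?sqr_ge0 // sqnD sqrrD !sqr_sqrtr ?sqn_ge0 //.
by rewrite lerD2r lerD2l mulr_natl ler_wMn2r // dotv_le_enorm.
Qed.

Lemma normr_sqnD_sub_le u h : `|sqn (u + h) - sqn u| <= enorm h * (enorm h + 2 * enorm u).
Proof.
have -> : sqn (u + h) - sqn u = 2 * dotv u h + sqn h by rewrite sqnD; ring.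
apply: le_trans (ler_normD _ _) _.
rewrite normrM (ger0_norm (sqn_ge0 h)) ger0_norm // sqn_enorm.
by have := normr_dotv_le_enorm u h; nra.
Qed.

Lemma normr_dotvD_sub_le v k u h :
  `|dotv (v + k) (u + h) - dotv v u| <= enorm k * (enorm u + enorm h) + enorm v * enorm h.
Proof.
have -> : dotv (v + k) (u + h) - dotv v u = dotv k (u + h) + dotv v h.
  by rewrite dotvDl !dotvDr; ring.
apply: le_trans (ler_normD _ _) (lerD _ (normr_dotv_le_enorm _ _)).
apply: le_trans (normr_dotv_le_enorm _ _) _.
by rewrite ler_wpM2l ?enorm_ge0 ?enormD_le.
Qed.

Lemma sqn_segment x y t :
  sqn (x + t *: (y - x)) = t * sqn y + (1 - t) * sqn x - t * (1 - t) * sqn (y - x).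
Proof.
rewrite /sqn /dotv !mulr_sumr -big_split -sumrB /=.
by apply: eq_bigr => i _; rewrite !mxE; ring.
Qed.

Definition quad_minorant (s : R) (x v y : vec) : R :=
  dotv v (y - x) + s / 2 * sqn (y - x).

Lemma quad_minorant_continuous (s : R) x v y {eta : R} : 0 < eta ->
  exists2 d : R, 0 < d & forall x' v', enorm (x' - x) < d -> enorm (v' - v) < d ->
    `|quad_minorant s x' v' y - quad_minorant s x v y| < eta.
Proof.
move=> eta_gt0; set Z := enorm (y - x); set V := enorm v; set c := `|s / 2|.
have [Z_ge0 V_ge0 c_ge0] : [/\ 0 <= Z, 0 <= V & 0 <= c].
  by split; rewrite ?enorm_ge0 ?normr_ge0.
have C_ge0 : 0 <= Z + 1 + V + c * (1 + 2 * Z) by nra.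
have [d d_gt0 [d_le1 dC]] := exists_small_factor _ _ C_ge0 eta_gt0.
exists d => // x' v' xd kd; rewrite /quad_minorant.
have -> : y - x' = (y - x) + (x - x') by rewrite addrA subrK.
have -> : v' = v + (v' - v) by rewrite addrC subrK.
set h := x - x'; set k := v' - v.
have hd : enorm h < d by rewrite -enormN opprB.
have h_ge0 := enorm_ge0 h; have k_ge0 := enorm_ge0 k.
have -> : forall a b a' b' : R, a' + s / 2 * b' - (a + s / 2 * b) = (a' - a) + s / 2 * (b' - b).
  by move=> *; ring.
apply: le_lt_trans (ler_normD _ _) _; rewrite normrM -/c.
have := normr_dotvD_sub_le v k (y - x) h; have := normr_sqnD_sub_le (y - x) h.
rewrite -/Z -/V => sqn_le dot_le.
have : c * `|sqn (y - x + h) - sqn (y - x)| <= c * (d * (1 + 2 * Z)).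
  by rewrite ler_wpM2l //; apply: le_trans sqn_le _; apply: ler_pM; lra.
have : enorm k * (Z + enorm h) <= d * (Z + 1) by apply: ler_pM; lra.
have : V * enorm h <= V * d by rewrite ler_wpM2l //; lra.
lra.
Qed.

End Euclidean.

Section SConvexMinorant.
Context {R : realType} {n : nat}.
Local Notation vec := 'rV[R]_n.
Context {s : R} {fh : vec -> \bar R}.
Hypothesis fh_sconvex : econvex (fun x => (fh x - (s / 2 * sqn x)%:E)%E).

Lemma sconvex_segment_le {x y} {a b t : R} : 0 <= t -> t <= 1 ->
  (fh x <= a%:E)%E -> (fh y <= b%:E)%E ->
  (fh (x + t *: (y - x)) <= (t * b + (1 - t) * a - s / 2 * (t * (1 - t) * sqn (y - x)))%:E)%E.
Proof.
move=> t_ge0 t_le1 fhx_le fhy_le.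
have shift c z : (fh z <= c%:E)%E -> (fh z - (s / 2 * sqn z)%:E <= (c - s / 2 * sqn z)%:E)%E.
  by move=> fhz_le; rewrite lee_subel_addr // -EFinD subrK.
have := fh_sconvex y x _ _ _ t_ge0 t_le1 (shift _ _ fhy_le) (shift _ _ fhx_le).
have -> : t *: y + (1 - t) *: x = x + t *: (y - x).
  by rewrite scalerBl scale1r scalerBr addrCA addrA.
rewrite lee_subel_addr // -EFinD sqn_segment => /le_trans; apply.
by rewrite lee_fin le_eqVlt; apply/orP; left; apply/eqP; ring.
Qed.

Lemma regular_subdiff_quad_minorant {x v} : regular_subdiff fh x v ->
  forall y, ((fine (fh x) + quad_minorant s x v y)%:E <= fh y)%E.
Proof.
move=> [fhx_fin fh_reg] y; set fx := fine (fh x).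
suff le_b b : (fh y <= b%:E)%E -> fx + quad_minorant s x v y <= b.
  move: le_b; case: (fh y) => [r| |] le_b; [by rewrite lee_fin le_b | exact: leey |].
  by exfalso; have := le_b (fx + quad_minorant s x v y - 1) (leNye _); lra.
move=> fhy_le; rewrite /quad_minorant.
set D := dotv v (y - x); set Q := sqn (y - x); set N := enorm (y - x).
(* Compare the e-subgradient inequality at x + t (y - x) with the chord bound,
   then let t and afterwards e tend to 0. *)
rewrite -subr_le0; apply: (le0_of_le_linear _ N _ ltr01) => e e_gt0 _.
have [d [d_gt0 fh_ge]] := fh_reg e e_gt0.
have N_ge0 : 0 <= N := enorm_ge0 _.
rewrite -subr_le0; apply: (le0_of_le_linear _ (s / 2 * Q) (Order.min 1 (d / (N + 1)))).
  by rewrite lt_min ltr01 divr_gt0 ?ltr_wpDl.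
move=> t t_gt0; rewrite lt_min => /andP[t_lt1 t_small].
have tN_lt : t * N < d by move: t_small; rewrite ltr_pdivlMr ?ltr_wpDl //; nra.
have := fh_ge (x + t *: (y - x)).
rewrite [x + _ - x]addrC addKr enormZ ger0_norm ?(ltW t_gt0) // dotvZr => /(_ tN_lt) fh_lower.
have fhx_le : (fh x <= fx%:E)%E by rewrite fineK.
have := le_trans fh_lower (sconvex_segment_le (ltW t_gt0) (ltW t_lt1) fhx_le fhy_le).
rewrite lee_fin -/fx -/D -/Q -/N => ineq.
by rewrite -(ler_pM2l t_gt0); lra.
Qed.

Lemma limiting_subdiff_quad_minorant {x v} : limiting_subdiff fh x v ->
  forall y, ((fine (fh x) + quad_minorant s x v y)%:E <= fh y)%E.
Proof.
move=> [_ [xs [vs [xs_reg [xs_cvg [vs_cvg fhxs_cvg]]]]]] y.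
have := fun k => regular_subdiff_quad_minorant (xs_reg k) y.
case: (fh y) => [r| |] minor; last by have := minor 0%N; rewrite leeNy_eq.
  2: exact: leey.
rewrite lee_fin; apply/ler_addgt0Pr => eta eta_gt0.
have eta2_gt0 : 0 < eta / 2 by rewrite divr_gt0.
have [d d_gt0 q_cont] := quad_minorant_continuous s x v y eta2_gt0.
have [N1 fhN1] := fhxs_cvg _ eta2_gt0.
have [N2 xsN2] := xs_cvg _ d_gt0.
have [N3 vsN3] := vs_cvg _ d_gt0.
pose k := (N1 + N2 + N3)%N.
have [_ fh_close] := fhN1 k (leq_trans (leq_addr _ _) (leq_addr _ _)).
have q_close := q_cont _ _ (xsN2 k (leq_trans (leq_addl _ _) (leq_addr _ _))) (vsN3 k (leq_addl _ _)).
have := minor k; rewrite lee_fin.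
by move: fh_close q_close; rewrite !ltr_norml => /andP[? ?] /andP[? ?]; lra.
Qed.

End SConvexMinorant.

Section SecondSubderivative.
Context {R : realType} {n : nat}.
Local Notation vec := 'rV[R]_n.
Implicit Types (f : vec -> \bar R) (x v w : vec).

Lemma second_quotient_ge {s : R} {f x v} {t : R} {w} : f x \is a fin_num -> 0 < t ->
  ((fine (f x) + quad_minorant s x v (x + t *: w))%:E <= f (x + t *: w)%R)%E ->
  ((s * sqn w)%:E <= (2 / t ^+ 2)%:E * (f (x + t *: w)%R - f x - (t * dotv v w)%:E))%E.
Proof.
move=> fx_fin t_gt0; rewrite /quad_minorant [x + _ - x]addrC addKr dotvZr sqnZ.
rewrite -(fineK fx_fin); set fx := fine (f x).
have t2_gt0 : 0 < t ^+ 2 by rewrite exprn_gt0.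
case: (f (x + t *: w)) => [r| |] minor.
- rewrite lee_fin in minor; rewrite -!EFinB -EFinM lee_fin.
  have -> : s * sqn w = 2 / t ^+ 2 * (s / 2 * (t ^+ 2 * sqn w)).
    by field; rewrite gt_eqF.
  by apply: ler_wpM2l; [rewrite divr_ge0 ?(ltW t2_gt0) | move: minor => /=; lra].
- by rewrite /= mulry gtr0_sg ?mul1e ?leey // divr_gt0.
- by rewrite leeNy_eq in minor.
Qed.

Lemma d2_ge_of_quad_minorant (s : R) f x v (r : R) : f x \is a fin_num -> 0 < r ->
  (forall y, enorm (y - x) < r -> ((fine (f x) + quad_minorant s x v y)%:E <= f y)%E) ->
  forall w, ((s * sqn w)%:E <= d2 f x v w)%E.
Proof.
move=> fx_fin r_gt0 minor w; apply/lee_subgt0Pr => eta eta_gt0; rewrite -EFinB.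
set W := enorm w; have W_ge0 : 0 <= W := enorm_ge0 w.
have K_ge0 : 0 <= `|s| * (1 + 2 * W) + (W + 1) by have := normr_ge0 s; nra.
have [|d d_gt0 [d_le1 dK]] := exists_small_factor _ (Order.min eta r) K_ge0.
  by rewrite lt_min eta_gt0.
move: dK; rewrite lt_min => /andP[dK_eta dK_r].
apply: le_ereal_sup_tmp; exists (ereal_inf [set q | exists (t : R) (w' : vec),
  [/\ 0 < t, t < d, enorm (w' - w) < d &
   q = ((2 / t ^+ 2)%:E * (f (x + t *: w')%R - f x - (t * dotv v w')%:E))%E]]).
  by exists d.
apply: le_ereal_inf_tmp => _ [t [w' [t_gt0 t_lt w'w ->]]].
have w'_le : enorm w' <= W + 1.
  by rewrite -(subrKC w w'); apply: le_trans (enormD_le _ _) _; rewrite lerD2l; lra.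
have sqn_close : `|s| * `|sqn w' - sqn w| <= `|s| * (d * (1 + 2 * W)).
  apply: ler_wpM2l => //; rewrite -{1}(subrKC w w').
  apply: le_trans (normr_sqnD_sub_le _ _) _; have := enorm_ge0 (w' - w).
  by rewrite -/W => ?; apply: ler_pM; lra.
apply: le_trans (second_quotient_ge fx_fin t_gt0 _); last first.
  apply: minor; rewrite [x + _ - x]addrC addKr enormZ gtr0_norm //.
  have : t * enorm w' <= d * (W + 1).
    by apply: ler_pM; [exact: ltW | exact: enorm_ge0 | exact: ltW |].
  have : 0 <= d * (`|s| * (1 + 2 * W)).
    by apply: mulr_ge0; [exact: ltW | apply: mulr_ge0 => //; lra].
  lra.
rewrite lee_fin; move: sqn_close; rewrite -normrM mulrBr; have := normr_ge0 s.
by rewrite ler_norml => _ /andP[]; nra.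
Qed.

Lemma var_s_convex_quad_minorant (s : R) f xb vb : var_s_convex s f xb vb ->
  exists eps r : R, [/\ 0 < eps, 0 < r & forall x v, gph_T f xb vb eps x v ->
    forall y, enorm (y - x) < r -> ((fine (f x) + quad_minorant s x v y)%:E <= f y)%E].
Proof.
move=> [_ [fh [U [V [eps0 [fh_sconvex [_ [_ [[dU [dU_gt0 U_ball]] [[dV [dV_gt0 V_ball]]
  [eps0_gt0 [fh_le [gph_eq fh_eq]]]]]]]]]]]]].
have dU2_gt0 : 0 < dU / 2 by rewrite divr_gt0.
exists (Order.min (Order.min (dU / 2) dV) eps0), (dU / 2); split => //.
  by rewrite !lt_min dU2_gt0 dV_gt0 eps0_gt0.
move=> x v [f_xv [xxb [vvb fx_lt]]] y yx.
move: xxb vvb fx_lt; rewrite !lt_min => /andP[/andP[xxb _] _] /andP[/andP[_ vvb] _] fx_lt.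
have {}fx_lt : (f x < (fine (f xb) + eps0)%:E)%E.
  by apply: lt_le_trans fx_lt _; rewrite lee_fin lerD2l ge_min lexx orbT.
have Ux : U x by apply: U_ball; lra.
have Vv : V v by exact: V_ball.
have [_ [_ fh_xv]] := (gph_eq x v).2 (conj (conj Ux fx_lt) (conj Vv f_xv)).
have Uy : U y.
  apply: U_ball; rewrite -(subrK x y) -addrA.
  by apply: le_lt_trans (enormD_le _ _) _; lra.
rewrite -(fh_eq x v Ux Vv fh_xv).
exact: le_trans (limiting_subdiff_quad_minorant fh_sconvex fh_xv y) (fh_le y Uy).
Qed.

End SecondSubderivative.

Theorem corollary3p6 (R : realType) (n : nat) (s : R) (f : 'rV[R]_n -> \bar R)
    (xb vb : 'rV[R]_n) :
  proper_fun f -> lsc_fun f ->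
  f xb \is a fin_num -> limiting_subdiff f xb vb ->
  var_s_convex s f xb vb ->
  exists eps : R, 0 < eps /\
    forall x v, gph_T f xb vb eps x v ->
      forall w : 'rV[R]_n, ((s * sqn w)%:E <= d2 f x v w)%E.
Proof.
move=> _ _ _ _ /var_s_convex_quad_minorant[eps [r [eps_gt0 r_gt0 minor]]].
exists eps; split => // x v xv_gph.
have [[fx_fin _] _] := xv_gph.
exact: d2_ge_of_quad_minorant fx_fin r_gt0 (minor x v xv_gph).
Qed.
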